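(* Let $P$ be a poset. Let $F_P:\mathbf{JF}_P\to\mathbf{JC}_P$ be the functor sending a frame-generating join-specification $\mathcal{U}$ to the join-completion $\eta:P\to\mathcal{I}_{\mathcal{U}}$, $p\mapsto p^\downarrow$, and sending an inclusion $\mathcal{U}_1\subseteq\mathcal{U}_2$ to the unique frame morphism $\mathcal{I}_{\mathcal{U}_1}\to\mathcal{I}_{\mathcal{U}_2}$ with $p^\downarrow\mapsto p^\downarrow$. Let $G_P:\mathbf{JC}_P\to\mathbf{JF}_P$ send a join-completion $e$ to $(\mathcal{U}_e)^-$ and an arrow $e_1\to e_2$ to the inclusion $(\mathcal{U}_{e_1})^-\subseteq(\mathcal{U}_{e_2})^-$. Then $F_P$ is left adjoint to $G_P$.
   Context: A join-specification for $P$ is a set $\mathcal{U}\subseteq\wp(P)$ such that $\bigvee S$ exists in $P$ for every $S\in\mathcal{U}$ and $\{p\}\in\mathcal{U}$ for every $p\in P$. A $\mathcal{U}$-ideal is a down-closed $C\subseteq P$ with $\bigvee S\in C$ whenever $S\in\mathcal{U}$, $S\subseteq C$; $\mathcal{I}_{\mathcal{U}}$ is the complete lattice of $\mathcal{U}$-ideals under inclusion; $\mathcal{U}$ is frame-generating if $\mathcal{I}_{\mathcal{U}}$ is a frame. A frame morphism is a lattice homomorphism preserving arbitrary joins. $\mathbf{JF}_P$ is the poset (thin category) of frame-generating join-specifications for $P$ under inclusion. A join-completion of $P$ is an order embedding $e:P\to L$ into a complete lattice $L$ such that every $x\in L$ is the join of $\{e(p):e(p)\le x\}$. $\mathbf{JC}_P$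 is the category whose objects are join-completions of $P$ and whose arrows $e_1\to e_2$ (for $e_i:P\to L_i$) are completely join-preserving maps $f:L_1\to L_2$ with $f\circ e_1=e_2$. For a join-completion $e:P\to L$, $\mathcal{U}_e=\{S\subseteq P:\bigvee S\text{ exists in }P\text{ and }e(\bigvee S)=\bigvee e[S]\}$ (equivalently $\bigvee S\in\Gamma_e(S)$, where $\Gamma_e$ is the closure operator whose closed sets are the sets $e^{-1}(x^\downarrow)$, $x\in L$). For a join-specification $\mathcal{V}$, $\mathcal{V}^-$ is the largest frame-generating join-specification contained in $\mathcal{V}$ (which exists). *)

Definition is_join {T : Type} (le : T -> T -> Prop) (S : T -> Prop) (x : T) : Prop :=
  (forall s, S s -> le s x) /\ (forall y, (forall s, S s -> le s y) -> le x y).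

Definition is_meet2 {T : Type} (le : T -> T -> Prop) (a b m : T) : Prop :=
  le m a /\ le m b /\ (forall y, le y a -> le y b -> le y m).

Definition complete {T : Type} (le : T -> T -> Prop) : Prop :=
  forall S : T -> Prop, exists x, is_join le S x.

Definition frame {T : Type} (le : T -> T -> Prop) : Prop :=
  complete le /\
  forall (a : T) (S : T -> Prop) (j m : T),
    is_join le S j -> is_meet2 le a j m ->
    is_join le (fun y => exists s, S s /\ is_meet2 le a s y) m.

Definition join_preserving {T1 T2 : Type} (le1 : T1 -> T1 -> Prop)
  (le2 : T2 -> T2 -> Prop) (f : T1 -> T2) : Prop :=
  forall (S : T1 -> Prop) (x : T1), is_join le1 S x ->
    is_join le2 (fun y => exists s, S s /\ y = f s) (f x).

Record Poset := {
  car :> Type;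
  le : car -> car -> Prop;
  le_refl : forall x, le x x;
  le_trans : forall x y z, le x y -> le y z -> le x z;
  le_antisym : forall x y, le x y -> le y x -> x = y
}.
Arguments le {p} _ _.

Definition complete_lattice (L : Poset) : Prop := complete (@le L).

Definition setsys (P : Poset) := (P -> Prop) -> Prop.

Definition subsys {P : Poset} (U V : setsys P) : Prop := forall S, U S -> V S.

Definition join_spec {P : Poset} (U : setsys P) : Prop :=
  (forall S, U S -> exists x, is_join (@le P) S x) /\
  (forall p : P, U (fun q => q = p)).

Definition down_closed {P : Poset} (C : P -> Prop) : Prop :=
  forall p q : P, le p q -> C q -> C p.

Definition is_U_ideal {P : Poset} (U : setsys P) (C : P -> Prop) : Prop :=
  down_closed C /\
  forall S x, U S -> (forall s, S s -> C s) -> is_join (@le P) S x -> C x.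

Definition Uideal {P : Poset} (U : setsys P) := { C : P -> Prop | is_U_ideal U C }.

Definition incl {P : Poset} {U : setsys P} (C D : Uideal U) : Prop :=
  forall p, proj1_sig C p -> proj1_sig D p.

Definition frame_generating {P : Poset} (U : setsys P) : Prop :=
  frame (@incl P U).

Lemma down_is_U_ideal {P : Poset} (U : setsys P) (p : P) :
  is_U_ideal U (fun q => le q p).
Proof.
  split.
  - intros a b Hab Hb. exact (le_trans P _ _ _ Hab Hb).
  - intros S x _ HS [_ Hx]. apply Hx. exact HS.
Qed.

Definition eta {P : Poset} (U : setsys P) (p : P) : Uideal U :=
  exist _ (fun q => le q p) (down_is_U_ideal U p).

Definition join_completion {P L : Poset} (e : P -> L) : Prop :=
  complete_lattice L /\
  (forall p q : P, le p q <-> le (e p) (e q)) /\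
  (forall x : L, is_join (@le L) (fun y => exists p, y = e p /\ le (e p) x) x).

Definition U_of {P L : Poset} (e : P -> L) : setsys P :=
  fun S => (exists x, is_join (@le P) S x) /\
           (forall x, is_join (@le P) S x ->
                      is_join (@le L) (fun y => exists s, S s /\ y = e s) (e x)).

Definition is_minus {P : Poset} (V W : setsys P) : Prop :=
  join_spec W /\ frame_generating W /\ subsys W V /\
  (forall W', join_spec W' -> frame_generating W' -> subsys W' V -> subsys W' W).

(* Hom_{JC_P}(F_P U, e): completely join-preserving f : I_U -> L with
   f o eta = e *)
Definition Hom_FU {P L : Poset} (U : setsys P) (e : P -> L) : Type :=
  { f : Uideal U -> L | join_preserving (@incl P U) (@le L) f /\
                        forall p, f (eta U p) = e p }.

(* Hom_{JF_P}(U, G_P e) is the (proof-irrelevant) proposition U ⊆ W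
   where W = (U_e)^-. *)

(* A join-preserving map out of I_U that extends e must send an ideal C to
   the join of e[C], since C is the join of the principal ideals below it; so
   such a map is unique.  It exists iff e preserves every join prescribed by U,
   i.e. U ⊆ U_e: then e^{-1}(y↓) is a U-ideal for every y, which is exactly what
   makes C |-> \/ e[C] join-preserving.  Since U is frame-generating, U ⊆ U_e
   is equivalent to U ⊆ (U_e)^-. *)

From Stdlib Require Import ClassicalEpsilon.

Definition image {A B : Type} (f : A -> B) (S : A -> Prop) : B -> Prop :=
  fun y => exists s, S s /\ y = f s.

Lemma is_join_unique (L : Poset) (S : L -> Prop) (x y : L) :
  is_join (@le L) S x -> is_join (@le L) S y -> x = y.
Proof.
  intros [Hx_ub Hx_least] [Hy_ub Hy_least].
  apply le_antisym; [apply Hx_least | apply Hy_least]; assumption.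
Qed.

Lemma is_join_ext {T : Type} (r : T -> T -> Prop) (S S' : T -> Prop) (x : T) :
  (forall z, S z <-> S' z) -> is_join r S x -> is_join r S' x.
Proof.
  intros E [Hub Hleast]. split.
  - intros s Hs. apply Hub, E, Hs.
  - intros y Hy. apply Hleast. intros s Hs. apply Hy, E, Hs.
Qed.

Lemma image_comp {A B C : Type} (f : A -> B) (g : B -> C) (S : A -> Prop) (z : C) :
  image g (image f S) z <-> image (fun a => g (f a)) S z.
Proof.
  split.
  - intros [b [[a [Ha ->]] ->]]. exists a. auto.
  - intros [a [Ha ->]]. exists (f a). split; [exists a |]; auto.
Qed.

Section PrincipalIdeals.

Variables (P : Poset) (U : setsys P).

Lemma Uideal_is_join_eta (C : Uideal U) :
  is_join (@incl P U) (image (eta U) (proj1_sig C)) C.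
Proof.
  split.
  - intros D [p [Hp ->]] q Hq. exact (proj1 (proj2_sig C) q p Hq Hp).
  - intros D HD p Hp. apply (HD (eta U p)); [exists p; auto | apply le_refl].
Qed.

Lemma eta_preserves_U_join (S : P -> Prop) (x : P) :
  U S -> is_join (@le P) S x -> is_join (@incl P U) (image (eta U) S) (eta U x).
Proof.
  intros HS Hx. split.
  - intros D [s [Hs ->]] q Hq. exact (le_trans P _ _ _ Hq (proj1 Hx s Hs)).
  - intros [D [Hdown Hclosed]] HD q Hq. simpl in *.
    apply (Hdown _ _ Hq), (Hclosed S x HS); [| exact Hx].
    intros s Hs. apply (HD (eta U s)); [exists s; auto | apply le_refl].
Qed.

End PrincipalIdeals.

Section Extensions.

Variables (P : Poset) (U : setsys P) (L : Poset) (e : P -> L).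

Lemma hom_maps_eta_joins (h : Uideal U -> L) :
  join_preserving (@incl P U) (@le L) h -> (forall p, h (eta U p) = e p) ->
  forall (S : P -> Prop) (D : Uideal U),
    is_join (@incl P U) (image (eta U) S) D -> is_join (@le L) (image e S) (h D).
Proof.
  intros Hjoin Heta S D HD.
  apply (is_join_ext _ (image h (image (eta U) S))); [| exact (Hjoin _ _ HD)].
  intros z. rewrite image_comp.
  split; intros [p [Hp ->]]; exists p; rewrite ?Heta; auto.
Qed.

Lemma hom_is_join_image (h : Hom_FU U e) (C : Uideal U) :
  is_join (@le L) (image e (proj1_sig C)) (proj1_sig h C).
Proof.
  destruct h as [h [Hjoin Heta]].
  exact (hom_maps_eta_joins h Hjoin Heta _ _ (Uideal_is_join_eta P U C)).
Qed.

Lemma hom_unique (h1 h2 : Hom_FU U e) (C : Uideal U) :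
  proj1_sig h1 C = proj1_sig h2 C.
Proof.
  exact (is_join_unique L _ _ _ (hom_is_join_image h1 C) (hom_is_join_image h2 C)).
Qed.

Lemma hom_U_sub_U_of : join_spec U -> Hom_FU U e -> subsys U (U_of e).
Proof.
  intros [Hjoins _] [h [Hjoin Heta]] S HS. split; [exact (Hjoins S HS) |].
  intros x Hx. rewrite <- Heta.
  exact (hom_maps_eta_joins h Hjoin Heta _ _ (eta_preserves_U_join P U S x HS Hx)).
Qed.

Hypothesis L_complete : complete (@le L).
Hypothesis e_monotone : forall p q : P, le p q -> le (e p) (e q).
Hypothesis U_sub_U_e : subsys U (U_of e).

Definition sup_image (C : P -> Prop) : L :=
  proj1_sig (constructive_indefinite_description _ (L_complete (image e C))).

Lemma sup_imageP (C : P -> Prop) : is_join (@le L) (image e C) (sup_image C).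
Proof. exact (proj2_sig (constructive_indefinite_description _ _)). Qed.

Lemma preimage_down_is_U_ideal (y : L) : is_U_ideal U (fun q => le (e q) y).
Proof.
  split.
  - intros a b Hab Hb. exact (le_trans L _ _ _ (e_monotone a b Hab) Hb).
  - intros S x HS HSy Hx.
    apply (proj2 (proj2 (U_sub_U_e S HS) x Hx)).
    intros z [s [Hs ->]]. exact (HSy s Hs).
Qed.

Lemma sup_image_join_preserving :
  join_preserving (@incl P U) (@le L) (fun C => sup_image (proj1_sig C)).
Proof.
  intros S X [HX_ub HX_least]. split.
  - intros y [C [HC ->]]. apply (proj2 (sup_imageP _)).
    intros z [p [Hp ->]]. apply (proj1 (sup_imageP _)).
    exists p. split; [exact (HX_ub C HC p Hp) | reflexivity].
  - intros y Hy. apply (proj2 (sup_imageP _)).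
    intros z [p [Hp ->]].
    (* X lies below the U-ideal e^{-1}(y↓), which contains every member of S. *)
    apply (HX_least (exist _ _ (preimage_down_is_U_ideal y))); [| exact Hp].
    intros C HC q Hq. simpl.
    apply (le_trans L _ (sup_image (proj1_sig C))).
    + apply (proj1 (sup_imageP _)). exists q. auto.
    + apply Hy. exists C. auto.
Qed.

Lemma sup_image_eta (p : P) : sup_image (proj1_sig (eta U p)) = e p.
Proof.
  apply (is_join_unique L (image e (fun q => le q p))); [apply sup_imageP |].
  split.
  - intros z [q [Hq ->]]. exact (e_monotone q p Hq).
  - intros y Hy. apply Hy. exists p. split; [apply le_refl | reflexivity].
Qed.

Definition hom_of_U_sub_U_of : Hom_FU U e :=
  exist _ (fun C => sup_image (proj1_sig C))
    (conj sup_image_join_preserving sup_image_eta).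

End Extensions.

Theorem theorem5p13 :
  forall (P : Poset) (U : setsys P),
    join_spec U -> frame_generating U ->
  forall (L : Poset) (e : P -> L), join_completion e ->
  forall W : setsys P, is_minus (U_of e) W ->
    exists (phi : Hom_FU U e -> subsys U W) (psi : subsys U W -> Hom_FU U e),
      forall h : Hom_FU U e, forall C : Uideal U,
        proj1_sig (psi (phi h)) C = proj1_sig h C.
Proof.
  intros P U HU HfU L e [Hcomplete [Horder _]] W [_ [_ [HW_sub HW_max]]].
  exists (fun h => HW_max U HU HfU (hom_U_sub_U_of P U L e HU h)).
  exists (fun HUW => hom_of_U_sub_U_of P U L e Hcomplete
                       (fun p q => proj1 (Horder p q))
                       (fun S HS => HW_sub S (HUW S HS))).
  intros h C. apply hom_unique.
Qed.
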